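(* Let $X_i$ be a nonnegative random variable with survival function $\overline{F}_i(x) = \mathbb{P}(X_i > x)$, and for $\theta \in (0,1)$ define $$t_i(\theta) := \sup\{ t \geq 0 : \theta \, \overline{F}_i(x) \leq \overline{F}_i(x/\theta) \text{ for all } x \in [0,t) \}.$$ Then $t_i(\theta) > 0$ for every $\theta \in (0,1)$. *)

From HB Require Import structures.
From mathcomp Require Import all_boot all_order all_algebra.
From mathcomp Require Import all_classical all_reals all_analysis.
Set Implicit Arguments. Unset Strict Implicit. Unset Printing Implicit Defensive.
Import Order.TTheory GRing.Theory Num.Theory.
Local Open Scope classical_set_scope.
Local Open Scope ring_scope.
Local Open Scope ereal_scope.

Definition survival (d : measure_display) (T : measurableType d) (R : realType)
  (P : probability T R) (X : {RV P >-> R}) (x : R) : \bar R :=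
  P [set w | x < X w]%R.

Definition tcrit (d : measure_display) (T : measurableType d) (R : realType)
  (P : probability T R) (X : {RV P >-> R}) (theta : R) : \bar R :=
  ereal_sup [set t%:E | t in [set t : R | (0 <= t)%R /\
     (forall x : R, (0 <= x)%R -> (x < t)%R ->
        theta%:E * survival X x <= survival X (x / theta))]].

From HB Require Import structures.
From mathcomp Require Import all_boot all_order all_algebra.
From mathcomp Require Import all_classical all_reals all_analysis.
Import Order.TTheory GRing.Theory Num.Theory.
Local Open Scope ring_scope.
Local Open Scope ereal_scope.

(* The survival function Fbar is nonincreasing and right-continuous
   (continuity from below of P along {x + 1/(n+1) < X}).  Since theta < 1, right
   continuity at 0 gives delta > 0 with theta Fbar(0) <= Fbar(delta).  For
   0 <= x < theta delta we have x/theta < delta, hence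
   theta Fbar(x) <= theta Fbar(0) <= Fbar(delta) <= Fbar(x/theta),
   so t(theta) >= theta delta > 0. *)

Section survival_function.
Context {d : measure_display} {T : measurableType d} {R : realType}.
Context {P : probability T R} (X : {RV P >-> R}).

Lemma measurable_rv_gt (a : R) : measurable [set w | (a < X w)%R]%classic.
Proof.
have -> : [set w | (a < X w)%R]%classic = (X @^-1` `]a, +oo[)%classic.
  by apply/seteqP; split=> w /=; rewrite in_itv /= andbT.
exact: measurable_funPTI.
Qed.

Lemma le_survival (x y : R) : (x <= y)%R -> survival X y <= survival X x.
Proof.
move=> xy; apply: le_measure; rewrite ?inE; try exact: measurable_rv_gt.
by move=> w /=; exact: le_lt_trans.
Qed.

Lemma survival_cvg_right (x : R) :
  (survival X (x + n.+1%:R^-1) @[n --> \oo] --> survival X x)%classic.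
Proof.
pose F n := [set w | (x + n.+1%:R^-1 < X w)%R]%classic.
have UF : (\bigcup_n F n)%classic = [set w | (x < X w)%R]%classic.
  apply/seteqP; split=> w /=.
    by move=> [n _ /=]; apply: le_lt_trans; rewrite lerDl invr_ge0.
  rewrite -subr_gt0 => Xw; have [N _ HN] := near_infty_natSinv_lt (PosNum Xw).
  by exists N => //; rewrite /F /= -ltrBrDl; apply: (HN N) => /=.
rewrite /survival -UF; apply: (nondecreasing_cvg_mu (mu := P) (F := F)).
- by move=> n; exact: measurable_rv_gt.
- by rewrite UF; exact: measurable_rv_gt.
- move=> n m nm; apply/subsetPset => w /=; apply: le_lt_trans.
  by rewrite lerD2l lef_pV2 ?posrE // ler_nat ltnS.
Qed.

Lemma survival_scaled_le_right (theta x : R) : (theta < 1)%R ->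
  exists2 delta : R, (0 < delta)%R &
    theta%:E * survival X x <= survival X (x + delta).
Proof.
move=> th1; set s := survival X x.
have s_fin : s \is a fin_num.
  rewrite ge0_fin_numE ?measure_ge0 //.
  by rewrite (le_lt_trans (probability_le1 _ (measurable_rv_gt x))) ?ltry.
have [s0|s_neq0] := eqVneq s 0.
  by exists 1%R => //; rewrite s0 mule0 measure_ge0.
suff [n hn] : exists n, theta%:E * s <= survival X (x + n.+1%:R^-1).
  by exists (n.+1%:R^-1)%R.
apply: contrapT => /forallNP below.
have : s <= theta%:E * s.
  apply: cvge_to_le (survival_cvg_right x) _.
  by near=> n; rewrite ltW // ltNge; apply/negP; exact: below.
have s_gt0 : (0 < fine s)%R.
  by rewrite -lte_fin fineK // lt0e s_neq0 measure_ge0.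
by rewrite -(fineK s_fin) -EFinM lee_fin ler_pMl // leNgt th1.
Unshelve. all: by end_near.
Qed.

End survival_function.

Theorem lemma12 (d : measure_display) (T : measurableType d) (R : realType)
  (P : probability T R) (X : {RV P >-> R})
  (Xnonneg : forall w, (0 <= X w)%R)
  (theta : R) (htheta : (0 < theta < 1)%R) :
  0 < tcrit X theta.
Proof.
case/andP: htheta => th0 th1.
have [delta delta0] := survival_scaled_le_right X theta 0 th1; rewrite add0r => hdelta.
have t0 : (0 < theta * delta)%R by rewrite mulr_gt0.
apply: (lt_le_trans (_ : 0 < (theta * delta)%:E)); first by rewrite lte_fin.
apply: ereal_sup_ubound; exists (theta * delta)%R => //; split; first exact: ltW.
move=> x x0 xlt.
apply: le_trans (le_trans hdelta _).
  by rewrite lee_pmul2l ?lte_fin // le_survival.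
by apply: le_survival; rewrite ler_pdivrMr // mulrC ltW.
Qed.
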